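(* If $\lambda>0$ and $\ell>0$ satisfy $\lambda\ell^2<\hat\lambda$, then $\mathcal{E}_\lambda[\gamma_{\rm larc}^{\lambda,\ell,1}]<\mathcal{E}_\lambda[\gamma_{\rm loop}^{\lambda,\ell,1}]$.
   Context: Elliptic functions: for $q\in[0,1)$, $x\in\mathbb{R}$, $\mathrm{F}(x,q)=\int_0^x(1-q^2\sin^2\theta)^{-1/2}\,d\theta$, $\mathrm{E}(x,q)=\int_0^x(1-q^2\sin^2\theta)^{1/2}\,d\theta$, $\mathrm{K}(q)=\mathrm{F}(\pi/2,q)$, $\mathrm{E}(q)=\mathrm{E}(\pi/2,q)$; $\mathrm{am}(\cdot,q)$ is the inverse of $x\mapsto\mathrm{F}(x,q)$, $\mathrm{cn}(x,q)=\cos\mathrm{am}(x,q)$. The function $q\mapsto2\mathrm{E}(q)-\mathrm{K}(q)$ is strictly decreasing on $[0,1)$ with unique zero $q_*\in(0,1)$. On $[1/\sqrt2,1)$ let $f(q)=(4q^4-5q^2+1)\mathrm{K}(q)+(-8q^4+8q^2-1)\mathrm{E}(q)$ and $g(q)=8(2\mathrm{E}(q)-\mathrm{K}(q))^2(2q^2-1)$. $f$ has a unique zero $\hat q\in[1/\sqrt2,1)$; $\hat\lambda:=g(\hat q)\approx0.70107$. $g(1/\sqrt2)=0$, $g$ strictly increasing on $[1/\sqrt2,\hat q]$, strictly decreasing on $[\hat q,q_*]$ with $g(q_* )=0$, strictly increasing on $[q_*,1)$ with $g\to\infty$ at $1$. For $c\in(0,\hat\lambda]$ let $q_2(c)\in[\hat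 q,q_* )$ solve $g(q)=c$; for $c>0$ let $q_3(c)\in(q_*,1)$ solve $g(q)=c$. $\mathcal{E}_\lambda[\gamma]=\int_\gamma k^2\,ds+\lambda L[\gamma]$ ($k$ signed curvature, $s$ arclength, $L$ length). Curves (arclength parametrized on $[0,2\mathrm{K}(q)/\alpha]$): $\gamma_{\rm larc}^{\lambda,\ell,1}(s)=\frac1\alpha\big(2\mathrm{E}(\mathrm{am}(\alpha s-\mathrm{K}(q),q),q)+2\mathrm{E}(q)-\alpha s,\ 2q\,\mathrm{cn}(\alpha s-\mathrm{K}(q),q)\big)$ with $q=q_2(\lambda\ell^2)$, $\alpha=\frac{2}{\ell}(2\mathrm{E}(q)-\mathrm{K}(q))$; $\gamma_{\rm loop}^{\lambda,\ell,1}(s)=\frac1\alpha\big(-2\mathrm{E}(\mathrm{am}(\alpha s-\mathrm{K}(q),q),q)-2\mathrm{E}(q)+\alpha s,\ 2q\,\mathrm{cn}(\alpha s-\mathrm{K}(q),q)\big)$ with $q=q_3(\lambda\ell^2)$, $\alpha=\frac{2}{\ell}(\mathrm{K}(q)-2\mathrm{E}(q))$. *)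

From Stdlib Require Import Reals Lra ClassicalEpsilon.
From Coquelicot Require Import Coquelicot.
Open Scope R_scope.

Definition ellF (x q : R) : R :=
  RInt (fun t => / sqrt (1 - q ^ 2 * (sin t) ^ 2)) 0 x.
Definition ellE (x q : R) : R :=
  RInt (fun t => sqrt (1 - q ^ 2 * (sin t) ^ 2)) 0 x.
Definition ellK (q : R) : R := ellF (PI / 2) q.
Definition ellEc (q : R) : R := ellE (PI / 2) q.

(* Jacobi amplitude: the inverse of x |-> F(x,q) (a strictly increasing
   bijection of R for q in [0,1)); chosen by Hilbert's epsilon. *)
Definition am (u q : R) : R := epsilon (inhabits 0) (fun x => ellF x q = u).
Definition cn (u q : R) : R := cos (am u q).

Definition qstar : R :=
  epsilon (inhabits 0) (fun q => 0 < q < 1 /\ 2 * ellEc q - ellK q = 0).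

Definition f_aux (q : R) : R :=
  (4 * q ^ 4 - 5 * q ^ 2 + 1) * ellK q + (- 8 * q ^ 4 + 8 * q ^ 2 - 1) * ellEc q.
Definition g_aux (q : R) : R :=
  8 * (2 * ellEc q - ellK q) ^ 2 * (2 * q ^ 2 - 1).

Definition qhat : R :=
  epsilon (inhabits 0) (fun q => / sqrt 2 <= q < 1 /\ f_aux q = 0).
Definition lamhat : R := g_aux qhat.

Definition q2 (c : R) : R :=
  epsilon (inhabits 0) (fun q => qhat <= q < qstar /\ g_aux q = c).
Definition q3 (c : R) : R :=
  epsilon (inhabits 0) (fun q => qstar < q < 1 /\ g_aux q = c).

Definition alpha_larc (lam l : R) : R :=
  2 / l * (2 * ellEc (q2 (lam * l ^ 2)) - ellK (q2 (lam * l ^ 2))).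
Definition gamma_larc (lam l : R) (s : R) : R * R :=
  let q := q2 (lam * l ^ 2) in
  let a := alpha_larc lam l in
  (/ a * (2 * ellE (am (a * s - ellK q) q) q + 2 * ellEc q - a * s),
   / a * (2 * q * cn (a * s - ellK q) q)).
Definition end_larc (lam l : R) : R :=
  2 * ellK (q2 (lam * l ^ 2)) / alpha_larc lam l.

Definition alpha_loop (lam l : R) : R :=
  2 / l * (ellK (q3 (lam * l ^ 2)) - 2 * ellEc (q3 (lam * l ^ 2))).
Definition gamma_loop (lam l : R) (s : R) : R * R :=
  let q := q3 (lam * l ^ 2) in
  let a := alpha_loop lam l in
  (/ a * (- 2 * ellE (am (a * s - ellK q) q) q - 2 * ellEc q + a * s),
   / a * (2 * q * cn (a * s - ellK q) q)).
Definition end_loop (lam l : R) : R :=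
  2 * ellK (q3 (lam * l ^ 2)) / alpha_loop lam l.

Definition speed (g : R -> R * R) (s : R) : R :=
  sqrt ((Derive (fun t => fst (g t)) s) ^ 2 + (Derive (fun t => snd (g t)) s) ^ 2).

Definition curvature (g : R -> R * R) (s : R) : R :=
  let x1 := Derive (fun t => fst (g t)) s in
  let y1 := Derive (fun t => snd (g t)) s in
  let x2 := Derive (Derive (fun t => fst (g t))) s in
  let y2 := Derive (Derive (fun t => snd (g t))) s in
  (x1 * y2 - y1 * x2) / (sqrt (x1 ^ 2 + y1 ^ 2)) ^ 3.

Definition curve_length (g : R -> R * R) (a b : R) : R :=
  RInt (speed g) a b.

Definition energy (lam : R) (g : R -> R * R) (a b : R) : R :=
  RInt (fun s => (curvature g s) ^ 2 * speed g s) a b + lam * curve_length g a b.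

From Stdlib Require Import Reals Lra Ranalysis5 ClassicalEpsilon FunctionalExtensionality.
From Coquelicot Require Import Coquelicot.
Open Scope R_scope.

(** Both curves are pieces [elastica (+-1) a q] of one unit-speed family whose amplitude
    runs from [-PI/2] to [PI/2], so their energy is [8a(E - (1 - q^2)K) + 2 lam K / a].
    With [a = 2|P|/l], [P = 2E - K] ([ellP]) and [lam l^2 = g(q)] this is [+-(8/l) Phi(q)],
    where [Phi = P (P + 2K(2q^2 - 1))] ([reduced_energy]); the claim becomes
    [Phi(q2) + Phi(q3) < 0].  Put [Psi = P sqrt(2q^2 - 1)] ([g_root]): then [g = 8 Psi^2],
    and since [P] changes sign at [qstar], [Psi(q2) = - Psi(q3)].
    For [k = K(qstar) sqrt(2 qstar^2 - 1)] the function [D = Phi - 2k Psi] ([energy_gap k])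
    vanishes at [qstar] and has derivative [2f(q)/(q(1 - q^2)) (K - k / sqrt(2q^2 - 1))].
    As [f < 0] beyond [qhat] and [K sqrt(2q^2 - 1)] is increasing, [D] increases up to
    [qstar] and decreases after it, so [D(q2), D(q3) < 0]; adding them gives
    [Phi(q2) + Phi(q3) < 2k(Psi(q2) + Psi(q3)) = 0].
    The moduli [qstar], [qhat], [q2 c], [q3 c] are defined by choice, so each is first shown
    to exist by the intermediate value theorem, using [K(q) -> +oo] as [q -> 1]. *)

Lemma lt_of_derive_pos (f df : R -> R) a b : a < b ->
  (forall x, a <= x <= b -> is_derive f x (df x)) ->
  (forall x, a < x < b -> 0 < df x) -> f a < f b.
Proof.
  intros Hab Hd Hpos.
  destruct (MVT_cor2 f df a b Hab) as [c [Hfc Hc]].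
  - intros c Hc. apply is_derive_Reals, Hd; exact Hc.
  - specialize (Hpos c Hc). nra.
Qed.

Lemma lt_of_derive_neg (f df : R -> R) a b : a < b ->
  (forall x, a <= x <= b -> is_derive f x (df x)) ->
  (forall x, a < x < b -> df x < 0) -> f b < f a.
Proof.
  intros Hab Hd Hneg.
  enough (- f a < - f b) by lra.
  apply (lt_of_derive_pos (fun x => - f x) (fun x => - df x)); auto.
  - intros x Hx. apply (is_derive_opp f). auto.
  - intros x Hx. specialize (Hneg x Hx). lra.
Qed.

Lemma continuity_pt_of_is_derive (f : R -> R) x l : is_derive f x l -> continuity_pt f x.
Proof. intros H. apply derivable_continuous_pt. exists l. apply is_derive_Reals, H. Qed.

Lemma continuity_pt_of_ex_derive (f : R -> R) x : ex_derive f x -> continuity_pt f x.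
Proof. intros [l H]. apply (continuity_pt_of_is_derive f x l H). Qed.

Lemma RInt_one a b : RInt (fun _ => 1) a b = b - a.
Proof. rewrite RInt_const. unfold scal; simpl; unfold mult; simpl. ring. Qed.

Lemma RInt_lincomb (f g : R -> R) al be a b : ex_RInt f a b -> ex_RInt g a b ->
  RInt (fun t => al * f t + be * g t) a b = al * RInt f a b + be * RInt g a b.
Proof.
  intros Hf Hg. apply is_RInt_unique.
  apply (is_RInt_plus (V := R_NormedModule) (fun t => scal al (f t)) (fun t => scal be (g t)));
    apply (is_RInt_scal (V := R_NormedModule)), (RInt_correct (V := R_CompleteNormedModule));
    assumption.
Qed.

Lemma RInt_even_opp (f : R -> R) x :
  (forall t, f (- t) = f t) -> ex_RInt f 0 (- x) -> RInt f 0 (- x) = - RInt f 0 x.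
Proof.
  intros Heven [I HI].
  rewrite (is_RInt_unique _ _ _ _ HI).
  rewrite <- Ropp_0 in HI at 1.
  apply is_RInt_comp_opp, is_RInt_opp in HI.
  apply (is_RInt_ext _ f) in HI.
  - rewrite (is_RInt_unique _ _ _ _ HI). symmetry. apply Ropp_involutive.
  - intros t _. rewrite Heven. apply Ropp_involutive.
Qed.

Lemma is_derive_RInt_param_ball (f df : R -> R -> R) a b x (d : posreal) :
  (forall u t, Rabs (u - x) < d -> is_derive (fun u => f u t) u (df u t)) ->
  (forall u, Rabs (u - x) < d -> ex_RInt (f u) a b) ->
  (forall t, continuity_2d_pt df x t) ->
  is_derive (fun u => RInt (f u) a b) x (RInt (df x) a b).
Proof.
  intros Hd Hint Hcont.
  evar_last.
  - apply (is_derive_RInt_param f a b x).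
    + exists d. intros u Hu t _. eexists. apply Hd, Hu.
    + intros t _. apply (continuity_2d_pt_ext_loc df); [|apply Hcont].
      exists d. intros u v Hu _. symmetry. apply is_derive_unique, Hd, Hu.
    + exists d. intros u Hu. apply Hint, Hu.
  - apply RInt_ext. intros t _. apply is_derive_unique, Hd.
    rewrite Rminus_eq_0, Rabs_R0. apply cond_pos.
Qed.

Lemma PI2_pos : 0 < PI / 2.
Proof. pose proof PI_RGT_0. lra. Qed.

Lemma sin_lt_1 t : 0 < t < PI / 2 -> sin t < 1.
Proof.
  intros Ht. rewrite <- sin_PI2. apply sin_increasing_1; lra.
Qed.

(** * The integrand and the incomplete integrals *)

(* Convertible with the integrands of [ellF] and [ellE], so lemmas stated with [delta]
   apply to them directly. *)
Definition delta (q t : R) : R := 1 - q ^ 2 * sin t ^ 2.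

Lemma delta_pos q t : q ^ 2 < 1 -> 0 < delta q t.
Proof.
  intros Hq. unfold delta. pose proof (SIN_bound t).
  assert (sin t ^ 2 <= 1) by nra. nra.
Qed.

Lemma delta_le_1 q t : delta q t <= 1.
Proof. unfold delta. nra. Qed.

Lemma delta_opp q t : delta q (- t) = delta q t.
Proof. unfold delta. rewrite sin_neg. ring. Qed.

Lemma is_derive_delta q t : is_derive (delta q) t (- 2 * q ^ 2 * sin t * cos t).
Proof. unfold delta. auto_derive; auto. ring. Qed.

Lemma ex_derive_delta q t : ex_derive (delta q) t.
Proof. eexists. apply is_derive_delta. Qed.

Lemma Derive_delta q t : Derive (delta q) t = - 2 * q ^ 2 * sin t * cos t.
Proof. apply is_derive_unique, is_derive_delta. Qed.

Lemma sqrt_delta_le_1 q t : sqrt (delta q t) <= 1.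
Proof. rewrite <- sqrt_1. apply sqrt_le_1_alt, delta_le_1. Qed.

Lemma continuous_sqrt_delta q t : q ^ 2 < 1 -> continuous (fun t => sqrt (delta q t)) t.
Proof.
  intros Hq. apply (ex_derive_continuous (K := R_AbsRing) (V := R_NormedModule)).
  auto_derive; auto using ex_derive_delta, delta_pos.
Qed.

Lemma continuous_inv_sqrt_delta q t : q ^ 2 < 1 -> continuous (fun t => / sqrt (delta q t)) t.
Proof.
  intros Hq. pose proof (sqrt_lt_R0 _ (delta_pos q t Hq)).
  apply (ex_derive_continuous (K := R_AbsRing) (V := R_NormedModule)).
  auto_derive; repeat split; auto using ex_derive_delta, delta_pos; lra.
Qed.

Lemma ex_RInt_sqrt_delta q a b : q ^ 2 < 1 -> ex_RInt (fun t => sqrt (delta q t)) a b.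
Proof.
  intros Hq. apply (ex_RInt_continuous (V := R_CompleteNormedModule)).
  intros t _. apply continuous_sqrt_delta, Hq.
Qed.

Lemma ex_RInt_inv_sqrt_delta q a b : q ^ 2 < 1 -> ex_RInt (fun t => / sqrt (delta q t)) a b.
Proof.
  intros Hq. apply (ex_RInt_continuous (V := R_CompleteNormedModule)).
  intros t _. apply continuous_inv_sqrt_delta, Hq.
Qed.

Lemma is_derive_ellF q x : q ^ 2 < 1 -> is_derive (fun x => ellF x q) x (/ sqrt (delta q x)).
Proof.
  intros Hq. apply (is_derive_RInt (fun t => / sqrt (delta q t)) _ 0).
  - apply filter_forall. intros y.
    apply (RInt_correct (V := R_CompleteNormedModule)), ex_RInt_inv_sqrt_delta, Hq.
  - apply continuous_inv_sqrt_delta, Hq.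
Qed.

Lemma is_derive_ellE q x : q ^ 2 < 1 -> is_derive (fun x => ellE x q) x (sqrt (delta q x)).
Proof.
  intros Hq. apply (is_derive_RInt (fun t => sqrt (delta q t)) _ 0).
  - apply filter_forall. intros y.
    apply (RInt_correct (V := R_CompleteNormedModule)), ex_RInt_sqrt_delta, Hq.
  - apply continuous_sqrt_delta, Hq.
Qed.

Lemma ellF_opp q x : q ^ 2 < 1 -> ellF (- x) q = - ellF x q.
Proof.
  intros Hq. apply RInt_even_opp; [|apply ex_RInt_inv_sqrt_delta, Hq].
  intros t. apply (f_equal (fun d => / sqrt d)), delta_opp.
Qed.

Lemma ellE_opp q x : q ^ 2 < 1 -> ellE (- x) q = - ellE x q.
Proof.
  intros Hq. apply RInt_even_opp; [|apply ex_RInt_sqrt_delta, Hq].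
  intros t. apply (f_equal sqrt), delta_opp.
Qed.

Lemma ellF_lt q x y : q ^ 2 < 1 -> x < y -> ellF x q < ellF y q.
Proof.
  intros Hq Hxy. apply (lt_of_derive_pos (fun x => ellF x q) (fun x => / sqrt (delta q x))); auto.
  - intros z _. apply is_derive_ellF, Hq.
  - intros z _. apply Rinv_0_lt_compat, sqrt_lt_R0, delta_pos, Hq.
Qed.

Lemma ellF_ge q x : q ^ 2 < 1 -> 0 <= x -> x <= ellF x q.
Proof.
  intros Hq Hx.
  replace x with (RInt (fun _ => 1) 0 x) at 1 by (rewrite RInt_one; apply Rminus_0_r).
  apply RInt_le; auto.
  - apply (ex_RInt_const (V := R_CompleteNormedModule)).
  - apply ex_RInt_inv_sqrt_delta, Hq.
  - intros t _. pose proof (sqrt_lt_R0 _ (delta_pos q t Hq)). pose proof (sqrt_delta_le_1 q t).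
    change (1 <= / sqrt (delta q t)). rewrite <- Rinv_1 at 1. apply Rinv_le_contravar; lra.
Qed.

Lemma ellF_surj q u : q ^ 2 < 1 -> exists x, ellF x q = u.
Proof.
  intros Hq.
  assert (Hcont : continuity (fun x => ellF x q)).
  { intros x. apply (continuity_pt_of_is_derive _ _ _ (is_derive_ellF q x Hq)). }
  pose proof (ellF_ge q (Rabs u) Hq (Rabs_pos u)).
  pose proof (ellF_opp q (Rabs u) Hq). pose proof (Rle_abs u). pose proof (Rle_abs (- u)).
  rewrite Rabs_Ropp in *.
  destruct (IVT_gen (fun x => ellF x q) (- Rabs u) (Rabs u) u Hcont) as [x [_ Hx]].
  - split; [apply Rle_trans with (ellF (- Rabs u) q); [apply Rmin_l|lra]
          | apply Rle_trans with (ellF (Rabs u) q); [lra|apply Rmax_r]].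
  - exists x. exact Hx.
Qed.

Lemma ellF_am q u : q ^ 2 < 1 -> ellF (am u q) q = u.
Proof. intros Hq. apply (epsilon_spec (inhabits 0) (fun x => ellF x q = u)), ellF_surj, Hq. Qed.

Lemma am_ellF q x : q ^ 2 < 1 -> am (ellF x q) q = x.
Proof.
  intros Hq. set (y := am _ q). pose proof (ellF_am q (ellF x q) Hq) as H. fold y in H.
  destruct (Rtotal_order y x) as [h|[h|h]]; auto;
    pose proof (ellF_lt q _ _ Hq h); lra.
Qed.

Lemma am_lt q u v : q ^ 2 < 1 -> u < v -> am u q < am v q.
Proof.
  intros Hq Huv. destruct (Rlt_or_le (am u q) (am v q)) as [h|h]; auto.
  enough (v <= u) by lra.
  rewrite <- (ellF_am q u Hq), <- (ellF_am q v Hq).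
  destruct h as [h|h]; [left; apply ellF_lt|right; rewrite h]; auto.
Qed.

Lemma am_le q u v : q ^ 2 < 1 -> u <= v -> am u q <= am v q.
Proof. intros Hq [h|<-]; [left; apply am_lt|right]; auto. Qed.

Lemma am_continuous q u : q ^ 2 < 1 -> continuity_pt (fun u => am u q) u.
Proof.
  intros Hq.
  apply (continuity_pt_recip_interv (fun x => ellF x q) _ (am (u - 1) q) (am (u + 1) q)).
  - apply am_lt; auto; lra.
  - intros x y _ Hxy _. apply ellF_lt; auto.
  - intros x _ _. apply ellF_am, Hq.
  - intros x H1 H2. rewrite !ellF_am in H1, H2 by exact Hq.
    split; apply am_le; auto.
  - intros x _. apply (continuity_pt_of_is_derive _ _ _ (is_derive_ellF q x Hq)).
  - rewrite !ellF_am by exact Hq. lra.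
Qed.

Lemma is_derive_am q u : q ^ 2 < 1 ->
  is_derive (fun u => am u q) u (sqrt (delta q (am u q))).
Proof.
  intros Hq. apply is_derive_Reals.
  pose (Prf := fun y (_ : am (u - 1) q <= y <= am (u + 1) q) =>
     exist (fun l => derivable_pt_lim (fun x => ellF x q) y l) (/ sqrt (delta q y))
       (proj1 (is_derive_Reals _ _ _) (is_derive_ellF q y Hq))).
  assert (Hmid : am (u - 1) q <= am u q <= am (u + 1) q) by (split; apply am_le; auto; lra).
  pose proof (sqrt_lt_R0 _ (delta_pos q (am u q) Hq)).
  replace (sqrt (delta q (am u q))) with (1 / / sqrt (delta q (am u q))) by (field; lra).
  apply (derivable_pt_lim_recip_interv _ _ (u - 1) (u + 1) u Prf (am_continuous q u Hq)
           ltac:(lra) ltac:(lra) Hmid).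
  - intros x _. apply ellF_am, Hq.
  - simpl. apply Rinv_neq_0_compat. lra.
Qed.

Lemma Derive_ellE q x : q ^ 2 < 1 -> Derive (fun x => ellE x q) x = sqrt (delta q x).
Proof. intros Hq. apply is_derive_unique, is_derive_ellE, Hq. Qed.

Lemma Derive_am q u : q ^ 2 < 1 -> Derive (fun u => am u q) u = sqrt (delta q (am u q)).
Proof. intros Hq. apply is_derive_unique, is_derive_am, Hq. Qed.

Lemma ex_derive_ellE q x : q ^ 2 < 1 -> ex_derive (fun x => ellE x q) x.
Proof. intros Hq. eexists. apply is_derive_ellE, Hq. Qed.

Lemma ex_derive_am q u : q ^ 2 < 1 -> ex_derive (fun u => am u q) u.
Proof. intros Hq. eexists. apply is_derive_am, Hq. Qed.

Lemma am_ellK q : q ^ 2 < 1 -> am (ellK q) q = PI / 2.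
Proof. apply am_ellF. Qed.

Lemma am_opp_ellK q : q ^ 2 < 1 -> am (- ellK q) q = - (PI / 2).
Proof. intros Hq. unfold ellK. rewrite <- ellF_opp by exact Hq. apply am_ellF, Hq. Qed.

(** * Unit-speed elastica *)

Definition elastica (sg a q : R) (s : R) : R * R :=
  (sg * (/ a * (2 * ellE (am (a * s - ellK q) q) q + 2 * ellEc q - a * s)),
   / a * (2 * q * cn (a * s - ellK q) q)).

Section Elastica.

Variables sg a q : R.
Hypothesis Hsg : sg * sg = 1.
Hypothesis Ha : a <> 0.
Hypothesis Hq : q ^ 2 < 1.

Let theta t := am (a * t - ellK q) q.

Lemma is_derive_theta t : is_derive theta t (a * sqrt (delta q (theta t))).
Proof.
  unfold theta. auto_derive; [apply ex_derive_am, Hq|].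
  rewrite Derive_am by exact Hq. unfold Rminus. ring.
Qed.

Lemma ex_derive_theta t : ex_derive theta t.
Proof. eexists. apply is_derive_theta. Qed.

Lemma Derive_theta t : Derive theta t = a * sqrt (delta q (theta t)).
Proof. apply is_derive_unique, is_derive_theta. Qed.

Lemma sqrt_delta_theta_sq t :
  sqrt (delta q (theta t)) * sqrt (delta q (theta t)) = delta q (theta t).
Proof. apply sqrt_sqrt, Rlt_le, delta_pos, Hq. Qed.

Let x' t := sg * (2 * delta q (theta t) - 1).
Let y' t := - 2 * q * sin (theta t) * sqrt (delta q (theta t)).
Let x'' t := - 4 * sg * q ^ 2 * a * sin (theta t) * cos (theta t) * sqrt (delta q (theta t)).
Let y'' t := - 2 * q * a * cos (theta t) * (2 * delta q (theta t) - 1).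

Lemma is_derive_elastica_x t : is_derive (fun t => fst (elastica sg a q t)) t (x' t).
Proof.
  apply (is_derive_ext (fun t => sg * (/ a * (2 * ellE (theta t) q + 2 * ellEc q - a * t)))).
  { reflexivity. }
  auto_derive; [auto using ex_derive_ellE, ex_derive_theta|].
  rewrite Derive_ellE, Derive_theta by exact Hq.
  pose proof (sqrt_delta_theta_sq t) as HS. unfold x'. set (S := sqrt _) in *.
  field [HS]. exact Ha.
Qed.

Lemma is_derive_elastica_y t : is_derive (fun t => snd (elastica sg a q t)) t (y' t).
Proof.
  apply (is_derive_ext (fun t => / a * (2 * q * cos (theta t)))).
  { reflexivity. }
  auto_derive; [auto using ex_derive_theta|].
  rewrite Derive_theta. unfold y'. field. exact Ha.
Qed.

Lemma is_derive_x' t : is_derive x' t (x'' t).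
Proof.
  unfold x', x''. auto_derive; [auto using ex_derive_theta, ex_derive_delta|].
  rewrite Derive_theta, Derive_delta. ring.
Qed.

Lemma is_derive_y' t : is_derive y' t (y'' t).
Proof.
  pose proof (delta_pos q (theta t) Hq).
  unfold y', y''. auto_derive; [repeat split; auto using ex_derive_theta, ex_derive_delta|].
  rewrite Derive_theta, Derive_delta.
  pose proof (sqrt_delta_theta_sq t) as HS. unfold delta in *.
  field [HS]. apply Rgt_not_eq, sqrt_lt_R0, H.
Qed.

Lemma Derive_elastica_x t : Derive (fun t => fst (elastica sg a q t)) t = x' t.
Proof. apply is_derive_unique, is_derive_elastica_x. Qed.

Lemma Derive_elastica_y t : Derive (fun t => snd (elastica sg a q t)) t = y' t.
Proof. apply is_derive_unique, is_derive_elastica_y. Qed.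

Lemma Derive2_elastica_x t : Derive (Derive (fun t => fst (elastica sg a q t))) t = x'' t.
Proof.
  rewrite (Derive_ext _ x' _ Derive_elastica_x). apply is_derive_unique, is_derive_x'.
Qed.

Lemma Derive2_elastica_y t : Derive (Derive (fun t => snd (elastica sg a q t))) t = y'' t.
Proof.
  rewrite (Derive_ext _ y' _ Derive_elastica_y). apply is_derive_unique, is_derive_y'.
Qed.

Lemma speed_elastica_sq t : x' t ^ 2 + y' t ^ 2 = 1.
Proof.
  pose proof (sqrt_delta_theta_sq t) as HS. unfold x', y'. unfold delta in *.
  set (S := sqrt _) in *. ring [Hsg HS].
Qed.

Lemma speed_elastica t : speed (elastica sg a q) t = 1.
Proof.
  unfold speed. rewrite Derive_elastica_x, Derive_elastica_y, speed_elastica_sq. apply sqrt_1.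
Qed.

Lemma bending_density_elastica t :
  curvature (elastica sg a q) t ^ 2 * speed (elastica sg a q) t
  = 4 * q ^ 2 * a ^ 2 * cos (theta t) ^ 2.
Proof.
  rewrite speed_elastica. unfold curvature.
  rewrite Derive_elastica_x, Derive_elastica_y, Derive2_elastica_x, Derive2_elastica_y.
  rewrite speed_elastica_sq, sqrt_1.
  pose proof (sqrt_delta_theta_sq t) as HS. unfold x', y', x'', y''. unfold delta in *.
  set (S := sqrt _) in *. field_simplify. ring [Hsg HS].
Qed.

Lemma is_derive_bending_primitive t :
  is_derive (fun t => 4 * a * ellE (theta t) q - 4 * a ^ 2 * (1 - q ^ 2) * t) t
    (4 * q ^ 2 * a ^ 2 * cos (theta t) ^ 2).
Proof.
  auto_derive; [auto using ex_derive_ellE, ex_derive_theta|].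
  rewrite Derive_theta, Derive_ellE by exact Hq.
  pose proof (sqrt_delta_theta_sq t) as HS. pose proof (sin2_cos2 (theta t)) as Hsc.
  unfold Rsqr in Hsc. unfold delta in *. set (S := sqrt _) in *.
  replace (cos (theta t) ^ 2) with (1 - sin (theta t) ^ 2) by (simpl; lra).
  transitivity (4 * a ^ 2 * (S * S) - 4 * a ^ 2 * (1 - q ^ 2)); [ring|rewrite HS; ring].
Qed.

Lemma continuous_bending_density t : continuous (fun t => 4 * q ^ 2 * a ^ 2 * cos (theta t) ^ 2) t.
Proof.
  apply (ex_derive_continuous (K := R_AbsRing) (V := R_NormedModule)).
  auto_derive. apply ex_derive_theta.
Qed.

Lemma energy_elastica lam :
  energy lam (elastica sg a q) 0 (2 * ellK q / a)
  = 8 * a * (ellEc q - (1 - q ^ 2) * ellK q) + lam * (2 * ellK q / a).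
Proof.
  unfold energy, curve_length.
  rewrite (RInt_ext _ _ _ _ (fun t _ => bending_density_elastica t)).
  rewrite (RInt_ext _ (fun _ => 1) _ _ (fun t _ => speed_elastica t)), RInt_const.
  rewrite (is_RInt_unique _ _ _ _ (is_RInt_derive _ _ 0 (2 * ellK q / a)
     (fun t _ => is_derive_bending_primitive t) (fun t _ => continuous_bending_density t))).
  unfold theta.
  replace (a * (2 * ellK q / a) - ellK q) with (ellK q) by (field; exact Ha).
  replace (a * 0 - ellK q) with (- ellK q) by ring.
  rewrite am_ellK, am_opp_ellK, ellE_opp by exact Hq.
  unfold minus, plus, opp, scal; simpl. unfold mult; simpl. unfold ellEc. field. exact Ha.
Qed.

End Elastica.

(** * Bounds on the complete integrals *)

Lemma ellK_pos q : q ^ 2 < 1 -> 0 < ellK q.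
Proof.
  intros Hq. apply RInt_gt_0; [apply PI2_pos| |].
  - intros t _. apply Rinv_0_lt_compat, sqrt_lt_R0, delta_pos, Hq.
  - intros t _. apply continuous_inv_sqrt_delta, Hq.
Qed.

Lemma ellEc_pos q : q ^ 2 < 1 -> 0 < ellEc q.
Proof.
  intros Hq. apply RInt_gt_0; [apply PI2_pos| |].
  - intros t _. apply sqrt_lt_R0, delta_pos, Hq.
  - intros t _. apply continuous_sqrt_delta, Hq.
Qed.

Lemma ellEc_le_PI2 q : q ^ 2 < 1 -> ellEc q <= PI / 2.
Proof.
  intros Hq.
  replace (PI / 2) with (RInt (fun _ => 1) 0 (PI / 2)) by (rewrite RInt_one; apply Rminus_0_r).
  apply RInt_le; [apply Rlt_le, PI2_pos|apply ex_RInt_sqrt_delta, Hq|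
                  apply (ex_RInt_const (V := R_CompleteNormedModule))|].
  intros t _. apply sqrt_delta_le_1.
Qed.

Lemma ellEc_le_ellK q : q ^ 2 < 1 -> ellEc q <= ellK q.
Proof.
  intros Hq. apply RInt_le; [apply Rlt_le, PI2_pos|apply ex_RInt_sqrt_delta, Hq|
                             apply ex_RInt_inv_sqrt_delta, Hq|].
  intros t _. change (sqrt (delta q t) <= / sqrt (delta q t)).
  pose proof (sqrt_lt_R0 _ (delta_pos q t Hq)). pose proof (sqrt_delta_le_1 q t).
  apply (Rmult_le_reg_l (sqrt (delta q t))); [lra|].
  rewrite Rinv_r by lra. nra.
Qed.

Lemma ellK_le q1 q2 : 0 <= q1 <= q2 -> q2 < 1 -> ellK q1 <= ellK q2.
Proof.
  intros Hq12 Hq2.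
  assert (H1 : q1 ^ 2 < 1) by nra. assert (H2 : q2 ^ 2 < 1) by nra.
  apply RInt_le; [apply Rlt_le, PI2_pos|apply ex_RInt_inv_sqrt_delta, H1|
                  apply ex_RInt_inv_sqrt_delta, H2|].
  intros t _. change (/ sqrt (delta q1 t) <= / sqrt (delta q2 t)).
  apply Rinv_le_contravar; [apply sqrt_lt_R0, delta_pos, H2|].
  apply sqrt_le_1_alt. unfold delta.
  pose proof (pow2_ge_0 (sin t)). assert (q1 ^ 2 <= q2 ^ 2) by nra. nra.
Qed.

Lemma RInt_inv_PI2_sub e : 0 < e ->
  RInt (fun t => / (PI / 2 - t + e)) 0 (PI / 2) = ln (PI / 2 + e) - ln e.
Proof.
  intros He. pose proof PI2_pos.
  assert (Hprim : forall t : R, Rmin 0 (PI / 2) <= t <= Rmax 0 (PI / 2) ->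
            is_derive (fun t => - ln (PI / 2 - t + e)) t (/ (PI / 2 - t + e))).
  { intros t Ht. rewrite Rmin_left, Rmax_right in Ht by lra.
    auto_derive; [lra|]. field. lra. }
  rewrite (is_RInt_unique _ _ _ _ (is_RInt_derive _ _ 0 (PI / 2) Hprim
    ltac:(intros t Ht; rewrite Rmin_left, Rmax_right in Ht by lra;
          apply (ex_derive_continuous (K := R_AbsRing) (V := R_NormedModule));
          auto_derive; lra))).
  unfold minus, plus, opp; simpl.
  replace (PI / 2 - PI / 2 + e) with e by ring. replace (PI / 2 - 0 + e) with (PI / 2 + e) by ring.
  ring.
Qed.

(* [delta q t = cos t ^ 2 + e ^ 2 sin t ^ 2 <= (cos t + e) ^ 2] and
   [cos t = sin (PI / 2 - t) <= PI / 2 - t]. *)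
Lemma inv_sqrt_delta_ge e t : 0 < e < 1 -> 0 <= t < PI / 2 ->
  / (PI / 2 - t + e) <= / sqrt (delta (sqrt (1 - e ^ 2)) t).
Proof.
  intros He Ht.
  assert (Hq2 : sqrt (1 - e ^ 2) ^ 2 = 1 - e ^ 2) by (rewrite <- Rsqr_pow2, Rsqr_sqrt; nra).
  apply Rinv_le_contravar; [apply sqrt_lt_R0, delta_pos; nra|].
  pose proof (cos_ge_0 t ltac:(lra) ltac:(lra)).
  assert (cos t <= PI / 2 - t) by (rewrite <- sin_shift; apply Rlt_le, sin_lt_x; lra).
  apply Rle_trans with (sqrt ((cos t + e) ^ 2)); [|rewrite sqrt_pow2; lra].
  apply sqrt_le_1_alt. unfold delta. rewrite Hq2.
  pose proof (sin2_cos2 t). pose proof (SIN_bound t). unfold Rsqr in *. nra.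
Qed.

Lemma ellK_ge_neg_ln e : 0 < e < 1 -> - ln e <= ellK (sqrt (1 - e ^ 2)).
Proof.
  intros He. pose proof PI2_1.
  assert (0 < ln (PI / 2 + e)) by (rewrite <- ln_1; apply ln_increasing; lra).
  apply Rle_trans with (RInt (fun t => / (PI / 2 - t + e)) 0 (PI / 2));
    [rewrite RInt_inv_PI2_sub; lra|].
  apply RInt_le; [lra| |apply ex_RInt_inv_sqrt_delta; rewrite <- Rsqr_pow2, Rsqr_sqrt; nra|].
  - apply (ex_RInt_continuous (V := R_CompleteNormedModule)). intros t Ht.
    rewrite Rmin_left, Rmax_right in Ht by lra.
    apply (ex_derive_continuous (K := R_AbsRing) (V := R_NormedModule)). auto_derive. lra.
  - intros t Ht. apply inv_sqrt_delta_ge; lra.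
Qed.

Lemma ellK_unbounded M : exists q, 0 < q < 1 /\ 3 / 4 <= q ^ 2 /\ M <= ellK q.
Proof.
  set (e := Rmin (exp (- M)) (1 / 2)).
  assert (He : 0 < e <= 1 / 2).
  { split; [apply Rmin_glb_lt; [apply exp_pos|lra]|apply Rmin_r]. }
  assert (Hq2 : sqrt (1 - e ^ 2) ^ 2 = 1 - e ^ 2) by (rewrite <- Rsqr_pow2, Rsqr_sqrt; nra).
  pose proof (sqrt_pos (1 - e ^ 2)).
  exists (sqrt (1 - e ^ 2)). split; [split; nra|split; [nra|]].
  apply Rle_trans with (- ln e); [|apply ellK_ge_neg_ln; lra].
  enough (ln e <= - M) by lra.
  rewrite <- (ln_exp (- M)). apply ln_le; [lra|apply Rmin_l].
Qed.

(** * Derivatives of the complete integrals in the modulus *)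

Lemma half_gap_pos q : q ^ 2 < 1 -> 0 < (1 - Rabs q) / 2.
Proof. intros Hq. rewrite <- pow2_abs in Hq. pose proof (Rabs_pos q). nra. Qed.

Lemma sq_lt_1_near q u : q ^ 2 < 1 -> Rabs (u - q) < (1 - Rabs q) / 2 -> u ^ 2 < 1.
Proof.
  intros Hq Hu. rewrite <- pow2_abs in Hq |- *.
  pose proof (Rabs_pos q). pose proof (Rabs_pos u).
  pose proof (Rabs_triang (u - q) q) as Htri. replace (u - q + q) with u in Htri by ring.
  assert (Rabs q < 1) by nra. nra.
Qed.

Lemma continuity_2d_pt_sin_snd x y : continuity_2d_pt (fun _ v => sin v) x y.
Proof.
  apply (continuity_1d_2d_pt_comp sin (fun _ v => v));
    [apply continuity_sin|apply continuity_2d_pt_id2].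
Qed.

Lemma continuity_2d_pt_delta x y : continuity_2d_pt delta x y.
Proof.
  apply (continuity_2d_pt_ext (fun u v => 1 - u * u * (sin v * sin v))).
  { intros. unfold delta. ring. }
  apply continuity_2d_pt_minus; [apply continuity_2d_pt_const|].
  pose proof (continuity_2d_pt_sin_snd x y).
  repeat apply continuity_2d_pt_mult; auto using continuity_2d_pt_id1.
Qed.

Lemma continuity_2d_pt_modulus_weight (h : R -> R) x y : continuity_pt h (delta x y) ->
  continuity_2d_pt (fun u v => u * sin v ^ 2 * h (delta u v)) x y.
Proof.
  intros Hh.
  apply (continuity_2d_pt_ext (fun u v => u * (sin v * sin v) * h (delta u v))).
  { intros. ring. }
  pose proof (continuity_2d_pt_sin_snd x y).
  repeat apply continuity_2d_pt_mult; auto using continuity_2d_pt_id1.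
  apply (continuity_1d_2d_pt_comp h delta); auto using continuity_2d_pt_delta.
Qed.

Definition ellK_dq_integrand (q t : R) : R := q * sin t ^ 2 * / (delta q t * sqrt (delta q t)).

Lemma is_derive_ellK_RInt q : q ^ 2 < 1 ->
  is_derive ellK q (RInt (ellK_dq_integrand q) 0 (PI / 2)).
Proof.
  intros Hq.
  apply (is_derive_RInt_param_ball (fun u t => / sqrt (delta u t)) ellK_dq_integrand 0 (PI / 2) q
           (mkposreal _ (half_gap_pos q Hq))).
  - intros u t Hu. pose proof (delta_pos u t (sq_lt_1_near q u Hq Hu)) as Hpos.
    pose proof (sqrt_lt_R0 _ Hpos). pose proof (sqrt_sqrt _ (Rlt_le _ _ Hpos)) as HS.
    unfold delta at 1. auto_derive;
      replace (1 + - (u * (u * 1) * (sin t * (sin t * 1)))) with (delta u t)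
        by (unfold delta; ring).
    + repeat split; lra.
    + unfold ellK_dq_integrand. set (S := sqrt _) in *. field [HS]. lra.
  - intros u Hu. apply ex_RInt_inv_sqrt_delta, (sq_lt_1_near q u Hq Hu).
  - intros t. apply (continuity_2d_pt_modulus_weight (fun s => / (s * sqrt s))).
    apply continuity_pt_of_ex_derive.
    pose proof (delta_pos q t Hq). pose proof (sqrt_lt_R0 _ H).
    auto_derive. split; [lra|]. split; [|easy]. apply Rmult_integral_contrapositive; lra.
Qed.

Lemma is_derive_ellEc_RInt q : q ^ 2 < 1 ->
  is_derive ellEc q (RInt (fun t => q * sin t ^ 2 * - / sqrt (delta q t)) 0 (PI / 2)).
Proof.
  intros Hq.
  apply (is_derive_RInt_param_ball (fun u t => sqrt (delta u t))
           (fun u t => u * sin t ^ 2 * - / sqrt (delta u t)) 0 (PI / 2) q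
           (mkposreal _ (half_gap_pos q Hq))).
  - intros u t Hu. pose proof (delta_pos u t (sq_lt_1_near q u Hq Hu)) as Hpos.
    pose proof (sqrt_lt_R0 _ Hpos).
    unfold delta at 1. auto_derive;
      replace (1 + - (u * (u * 1) * (sin t * (sin t * 1)))) with (delta u t)
        by (unfold delta; ring).
    + lra.
    + field. lra.
  - intros u Hu. apply ex_RInt_sqrt_delta, (sq_lt_1_near q u Hq Hu).
  - intros t. apply (continuity_2d_pt_modulus_weight (fun s => - / sqrt s)).
    apply continuity_pt_of_ex_derive.
    pose proof (delta_pos q t Hq). pose proof (sqrt_lt_R0 _ H).
    auto_derive. repeat split; lra.
Qed.

Lemma is_derive_ellEc q : 0 < q < 1 -> is_derive ellEc q ((ellEc q - ellK q) / q).
Proof.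
  intros Hq. assert (Hq2 : q ^ 2 < 1) by nra.
  evar_last; [apply (is_derive_ellEc_RInt q Hq2)|].
  rewrite (RInt_ext _ (fun t => / q * sqrt (delta q t) + (- / q) * / sqrt (delta q t))).
  - rewrite RInt_lincomb by auto using ex_RInt_sqrt_delta, ex_RInt_inv_sqrt_delta.
    change (RInt (fun t => sqrt (delta q t)) 0 (PI / 2)) with (ellEc q).
    change (RInt (fun t => / sqrt (delta q t)) 0 (PI / 2)) with (ellK q).
    field. lra.
  - intros t _. pose proof (delta_pos q t Hq2) as Hpos.
    pose proof (sqrt_lt_R0 _ Hpos). pose proof (sqrt_sqrt _ (Rlt_le _ _ Hpos)) as HS.
    unfold delta in *. set (S := sqrt _) in *. simpl. field [HS]. lra.
Qed.

Lemma ex_derive_ellK_dq_integrand q t : q ^ 2 < 1 -> ex_derive (ellK_dq_integrand q) t.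
Proof.
  intros Hq. pose proof (delta_pos q t Hq). pose proof (sqrt_lt_R0 _ H).
  unfold ellK_dq_integrand. auto_derive. repeat split; auto using ex_derive_delta.
  apply Rmult_integral_contrapositive; lra.
Qed.

Lemma is_derive_ellK_modulus_primitive q (t : R) : q ^ 2 < 1 ->
  is_derive (fun t => q ^ 2 * sin t * cos t / sqrt (delta q t)) t
    (sqrt (delta q t) + (q ^ 2 - 1) * / sqrt (delta q t)
     - q * (1 - q ^ 2) * ellK_dq_integrand q t).
Proof.
  intros Hq. pose proof (delta_pos q t Hq) as Hpos. pose proof (sqrt_lt_R0 _ Hpos).
  pose proof (sqrt_sqrt _ (Rlt_le _ _ Hpos)) as HS.
  assert (Hc : cos t * cos t = 1 - sin t * sin t)
    by (pose proof (sin2_cos2 t); unfold Rsqr in *; lra).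
  auto_derive; [repeat split; auto using ex_derive_delta; lra|].
  rewrite Derive_delta. unfold ellK_dq_integrand, delta in *.
  set (S := sqrt _) in *. field [HS Hc]. split; [lra|]. apply Rgt_not_eq. nra.
Qed.

Lemma ellK_modulus_identity q : 0 < q < 1 ->
  q * (1 - q ^ 2) * RInt (ellK_dq_integrand q) 0 (PI / 2) = ellEc q - (1 - q ^ 2) * ellK q.
Proof.
  intros Hq. assert (Hq2 : q ^ 2 < 1) by nra.
  set (h t := sqrt (delta q t) + (q ^ 2 - 1) * / sqrt (delta q t)
              - q * (1 - q ^ 2) * ellK_dq_integrand q t).
  assert (Hex : ex_RInt (ellK_dq_integrand q) 0 (PI / 2)).
  { apply (ex_RInt_continuous (V := R_CompleteNormedModule)). intros t _.
    apply (ex_derive_continuous (K := R_AbsRing) (V := R_NormedModule)).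
    apply ex_derive_ellK_dq_integrand, Hq2. }
  (* The primitive [q^2 sin t cos t / sqrt (delta q t)] of [h] vanishes at [0] and [PI/2]. *)
  assert (Hh : is_RInt h 0 (PI / 2) 0).
  { evar_last.
    - apply (is_RInt_derive (fun t => q ^ 2 * sin t * cos t / sqrt (delta q t)));
        intros t _; [apply is_derive_ellK_modulus_primitive, Hq2|].
      pose proof (sqrt_lt_R0 _ (delta_pos q t Hq2)).
      apply (ex_derive_continuous (K := R_AbsRing) (V := R_NormedModule)). unfold h.
      auto_derive.
      repeat split; auto using ex_derive_delta, delta_pos, ex_derive_ellK_dq_integrand; lra.
    - rewrite cos_PI2, sin_0. unfold minus, plus, opp. simpl. field.
      split; apply Rgt_not_eq, sqrt_lt_R0, delta_pos, Hq2. }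
  transitivity (RInt (fun t => 1 * h t + q * (1 - q ^ 2) * ellK_dq_integrand q t) 0 (PI / 2)).
  - rewrite RInt_lincomb, (is_RInt_unique _ _ _ _ Hh); [ring|eexists; apply Hh|apply Hex].
  - transitivity (1 * ellEc q + (q ^ 2 - 1) * ellK q); [|ring].
    change (ellEc q) with (RInt (fun t => sqrt (delta q t)) 0 (PI / 2)).
    change (ellK q) with (RInt (fun t => / sqrt (delta q t)) 0 (PI / 2)).
    rewrite <- RInt_lincomb by auto using ex_RInt_sqrt_delta, ex_RInt_inv_sqrt_delta.
    apply RInt_ext. intros t _. unfold h. simpl. ring.
Qed.

Lemma is_derive_ellK q : 0 < q < 1 ->
  is_derive ellK q ((ellEc q - (1 - q ^ 2) * ellK q) / (q * (1 - q ^ 2))).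
Proof.
  intros Hq. assert (Hq2 : q ^ 2 < 1) by nra.
  replace (_ / _) with (RInt (ellK_dq_integrand q) 0 (PI / 2)).
  - apply is_derive_ellK_RInt, Hq2.
  - apply (Rmult_eq_reg_l (q * (1 - q ^ 2))); [|nra].
    rewrite ellK_modulus_identity by exact Hq. field. split; nra.
Qed.

Lemma ex_derive_ellK q : 0 < q < 1 -> ex_derive ellK q.
Proof. intros Hq. eexists. apply is_derive_ellK, Hq. Qed.

Lemma ex_derive_ellEc q : 0 < q < 1 -> ex_derive ellEc q.
Proof. intros Hq. eexists. apply is_derive_ellEc, Hq. Qed.

Lemma Derive_ellK q : 0 < q < 1 ->
  Derive ellK q = (ellEc q - (1 - q ^ 2) * ellK q) / (q * (1 - q ^ 2)).
Proof. intros Hq. apply is_derive_unique, is_derive_ellK, Hq. Qed.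

Lemma Derive_ellEc q : 0 < q < 1 -> Derive ellEc q = (ellEc q - ellK q) / q.
Proof. intros Hq. apply is_derive_unique, is_derive_ellEc, Hq. Qed.

(** * The moduli qstar, qhat, q2 and q3 *)

Definition ellP (q : R) : R := 2 * ellEc q - ellK q.

Lemma ellP_pos q : q ^ 2 <= 1 / 2 -> 0 < ellP q.
Proof.
  intros Hq. assert (Hq1 : q ^ 2 < 1) by lra.
  unfold ellP.
  change (ellEc q) with (RInt (fun t => sqrt (delta q t)) 0 (PI / 2)).
  change (ellK q) with (RInt (fun t => / sqrt (delta q t)) 0 (PI / 2)).
  replace (2 * _ - _)
    with (RInt (fun t => 2 * sqrt (delta q t) + (- 1) * / sqrt (delta q t)) 0 (PI / 2))
    by (rewrite RInt_lincomb by auto using ex_RInt_sqrt_delta, ex_RInt_inv_sqrt_delta; simpl; ring).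
  apply RInt_gt_0; [apply PI2_pos| |].
  - intros t Ht. pose proof (delta_pos q t Hq1) as Hpos.
    pose proof (sqrt_lt_R0 _ Hpos). pose proof (sqrt_sqrt _ (Rlt_le _ _ Hpos)) as HS.
    pose proof (sin_lt_1 t Ht). pose proof (sin_gt_0 t ltac:(lra) ltac:(lra)).
    assert (1 < 2 * delta q t) by (unfold delta; nra).
    set (S := sqrt (delta q t)) in *.
    replace (2 * S + -1 * / S) with ((2 * (S * S) - 1) / S) by (field; lra).
    apply Rdiv_lt_0_compat; lra.
  - intros t _. apply (ex_derive_continuous (K := R_AbsRing) (V := R_NormedModule)).
    pose proof (sqrt_lt_R0 _ (delta_pos q t Hq1)).
    auto_derive. repeat split; auto using ex_derive_delta, delta_pos; lra.
Qed.

Lemma is_derive_ellP q : 0 < q < 1 ->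
  is_derive ellP q (((1 - 2 * q ^ 2) * ellEc q - (1 - q ^ 2) * ellK q) / (q * (1 - q ^ 2))).
Proof.
  intros Hq. unfold ellP. auto_derive; [auto using ex_derive_ellK, ex_derive_ellEc|].
  rewrite Derive_ellK, Derive_ellEc by exact Hq. field. split; nra.
Qed.

Lemma ellP_lt q1 q2 : 0 < q1 < q2 -> q2 < 1 -> ellP q2 < ellP q1.
Proof.
  intros Hq12 Hq2.
  apply (lt_of_derive_neg ellP
    (fun q => ((1 - 2 * q ^ 2) * ellEc q - (1 - q ^ 2) * ellK q) / (q * (1 - q ^ 2))));
    [lra| intros q Hq; apply is_derive_ellP; lra|].
  intros q Hq. assert (Hq1 : q ^ 2 < 1) by nra.
  pose proof (ellEc_pos q Hq1). pose proof (ellK_pos q Hq1). pose proof (ellEc_le_ellK q Hq1).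
  apply Rdiv_neg_pos; [|apply Rmult_lt_0_compat; nra].
  assert (0 < q ^ 2 * ellK q) by (apply Rmult_lt_0_compat; nra).
  assert (0 < (1 - q ^ 2) * ellK q) by (apply Rmult_lt_0_compat; nra).
  destruct (Rle_or_lt (2 * q ^ 2) 1).
  - assert (0 <= (1 - 2 * q ^ 2) * (ellK q - ellEc q)) by (apply Rmult_le_pos; lra). nra.
  - assert (0 < (2 * q ^ 2 - 1) * ellEc q) by (apply Rmult_lt_0_compat; lra). nra.
Qed.

Lemma continuity_pt_ellP q : 0 < q < 1 -> continuity_pt ellP q.
Proof. intros Hq. apply (continuity_pt_of_is_derive _ _ _ (is_derive_ellP q Hq)). Qed.

Lemma ellP_root_exists : exists q, 0 < q < 1 /\ 2 * ellEc q - ellK q = 0.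
Proof.
  destruct (ellK_unbounded (PI + 1)) as [q1 [Hq1 [Hq1sq HK]]].
  assert (Hneg : ellP q1 < 0) by (unfold ellP; pose proof (ellEc_le_PI2 q1 ltac:(nra)); lra).
  assert (Hpos : 0 < ellP (1 / 2)) by (apply ellP_pos; lra).
  destruct (IVT_interv (fun q => - ellP q) (1 / 2) q1) as [q [Hq Hq0]]; [| nra | lra | lra |].
  - intros q Hq. apply continuity_pt_opp, continuity_pt_ellP. lra.
  - exists q. split; [lra|]. fold (ellP q). lra.
Qed.

Lemma qstar_spec : 0 < qstar < 1 /\ ellP qstar = 0.
Proof.
  apply (epsilon_spec (inhabits 0) (fun q => 0 < q < 1 /\ 2 * ellEc q - ellK q = 0)).
  apply ellP_root_exists.
Qed.

Lemma ellP_pos_lt_qstar q : 0 < q < qstar -> 0 < ellP q.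
Proof.
  intros Hq. destruct qstar_spec as [Hs Hs0]. rewrite <- Hs0. apply ellP_lt; lra.
Qed.

Lemma ellP_neg_gt_qstar q : qstar < q < 1 -> ellP q < 0.
Proof.
  intros Hq. destruct qstar_spec as [Hs Hs0]. rewrite <- Hs0. apply ellP_lt; lra.
Qed.

Lemma inv_sqrt2_sq : (/ sqrt 2) ^ 2 = 1 / 2.
Proof. rewrite pow_inv, <- Rsqr_pow2, Rsqr_sqrt by lra. lra. Qed.

Lemma inv_sqrt2_pos : 0 < / sqrt 2.
Proof. apply Rinv_0_lt_compat, sqrt_lt_R0. lra. Qed.

Lemma inv_sqrt2_lt_qstar : / sqrt 2 < qstar.
Proof.
  destruct qstar_spec as [Hs Hs0].
  pose proof (ellP_pos (/ sqrt 2) (Req_le _ _ inv_sqrt2_sq)).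
  destruct (Rtotal_order (/ sqrt 2) qstar) as [h|[h|h]]; auto.
  - rewrite h in H. lra.
  - assert (/ sqrt 2 < 1) by (pose proof inv_sqrt2_sq; pose proof inv_sqrt2_pos; nra).
    pose proof (ellP_lt qstar (/ sqrt 2) ltac:(lra) ltac:(lra)). lra.
Qed.

Lemma is_derive_f_aux q : 0 < q < 1 ->
  is_derive f_aux q (q * ((20 * q ^ 2 - 13) * ellK q - 20 * (2 * q ^ 2 - 1) * ellEc q)).
Proof.
  intros Hq. unfold f_aux. auto_derive; [auto using ex_derive_ellK, ex_derive_ellEc|].
  rewrite Derive_ellK, Derive_ellEc by exact Hq. field. split; nra.
Qed.

Lemma f_aux_inv_sqrt2_pos : 0 < f_aux (/ sqrt 2).
Proof.
  pose proof (ellP_pos (/ sqrt 2) (Req_le _ _ inv_sqrt2_sq)).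
  unfold f_aux, ellP in *. replace ((/ sqrt 2) ^ 4) with (((/ sqrt 2) ^ 2) ^ 2) by ring.
  rewrite inv_sqrt2_sq. lra.
Qed.

Lemma f_aux_neg_ge_qstar q : qstar <= q < 1 -> f_aux q < 0.
Proof.
  intros Hq. pose proof inv_sqrt2_lt_qstar. pose proof inv_sqrt2_sq. pose proof inv_sqrt2_pos.
  assert (Hq2 : 1 / 2 < q ^ 2 < 1) by nra.
  assert (HP : ellP q <= 0).
  { destruct (proj1 Hq) as [h|<-]; [apply Rlt_le, ellP_neg_gt_qstar; lra|].
    apply Req_le, qstar_spec. }
  pose proof (ellEc_pos q ltac:(lra)). pose proof (ellK_pos q ltac:(lra)).
  unfold f_aux, ellP in *. replace (q ^ 4) with (q ^ 2 * q ^ 2) by ring.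
  set (u := q ^ 2) in *.
  assert (4 * (u * u) - 5 * u + 1 < 0) by nra.
  assert ((4 * (u * u) - 5 * u + 1) * ellK q <= (4 * (u * u) - 5 * u + 1) * (2 * ellEc q))
    by (apply Rmult_le_compat_neg_l; lra).
  assert ((1 - 2 * u) * ellEc q < 0) by (apply Rmult_neg_pos; lra).
  lra.
Qed.

Lemma f_aux_lt q1 q2 : / sqrt 2 <= q1 < q2 -> q2 <= qstar -> f_aux q2 < f_aux q1.
Proof.
  intros Hq12 Hq2. destruct qstar_spec as [Hs _]. pose proof inv_sqrt2_pos.
  apply (lt_of_derive_neg f_aux
    (fun q => q * ((20 * q ^ 2 - 13) * ellK q - 20 * (2 * q ^ 2 - 1) * ellEc q)));
    [lra| intros q Hq; apply is_derive_f_aux; lra|].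
  intros q Hq. pose proof inv_sqrt2_sq.
  assert (Hu : 1 / 2 < q ^ 2 < 1) by nra.
  pose proof (ellP_pos_lt_qstar q ltac:(lra)) as HP. unfold ellP in HP.
  pose proof (ellEc_pos q ltac:(lra)). pose proof (ellK_pos q ltac:(lra)).
  apply Rmult_pos_neg; [lra|]. set (u := q ^ 2) in *.
  destruct (Rle_or_lt (20 * u - 13) 0).
  - assert ((20 * u - 13) * ellK q <= 0) by nra.
    assert (0 < 20 * (2 * u - 1) * ellEc q) by (apply Rmult_lt_0_compat; lra).
    lra.
  - assert ((20 * u - 13) * ellK q < (20 * u - 13) * (2 * ellEc q))
      by (apply Rmult_lt_compat_l; lra).
    lra.
Qed.

Lemma f_aux_root_exists : exists q, / sqrt 2 <= q < 1 /\ f_aux q = 0.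
Proof.
  destruct qstar_spec as [Hs _]. pose proof inv_sqrt2_lt_qstar. pose proof inv_sqrt2_pos.
  destruct (IVT_interv (fun q => - f_aux q) (/ sqrt 2) qstar) as [q [Hq Hq0]]; [|lra| | |].
  - intros q Hq. apply continuity_pt_opp.
    apply (continuity_pt_of_is_derive _ _ _ (is_derive_f_aux q ltac:(lra))).
  - pose proof f_aux_inv_sqrt2_pos. lra.
  - pose proof (f_aux_neg_ge_qstar qstar ltac:(lra)). lra.
  - exists q. split; lra.
Qed.

Lemma qhat_spec : / sqrt 2 <= qhat < 1 /\ f_aux qhat = 0.
Proof.
  apply (epsilon_spec (inhabits 0) (fun q => / sqrt 2 <= q < 1 /\ f_aux q = 0)).
  apply f_aux_root_exists.
Qed.

Lemma qhat_lt_qstar : qhat < qstar.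
Proof.
  destruct qhat_spec as [Hq Hq0]. destruct (Rlt_or_le qhat qstar) as [h|h]; auto.
  pose proof (f_aux_neg_ge_qstar qhat ltac:(lra)). lra.
Qed.

Lemma f_aux_neg_gt_qhat q : qhat < q < 1 -> f_aux q < 0.
Proof.
  intros Hq. destruct qhat_spec as [Hq1 Hq0].
  destruct (Rle_or_lt qstar q) as [h|h].
  - apply f_aux_neg_ge_qstar. lra.
  - rewrite <- Hq0. apply f_aux_lt; lra.
Qed.

Lemma continuity_pt_g_aux q : 0 < q < 1 -> continuity_pt g_aux q.
Proof.
  intros Hq. apply continuity_pt_of_ex_derive. unfold g_aux.
  auto_derive. auto using ex_derive_ellK, ex_derive_ellEc.
Qed.

Lemma g_aux_qstar : g_aux qstar = 0.
Proof. unfold g_aux. destruct qstar_spec as [_ H]. unfold ellP in H. rewrite H. ring. Qed.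

Lemma q2_spec c : 0 < c < lamhat -> qhat <= q2 c < qstar /\ g_aux (q2 c) = c.
Proof.
  intros Hc. apply (epsilon_spec (inhabits 0) (fun q => qhat <= q < qstar /\ g_aux q = c)).
  pose proof qhat_lt_qstar. destruct qhat_spec as [Hqhat _]. pose proof inv_sqrt2_pos.
  destruct (IVT_interv (fun q => c - g_aux q) qhat qstar) as [q [Hq Hq0]]; auto.
  - intros q Hq. apply continuity_pt_minus; [apply continuity_pt_const; intros ? ?; auto|].
    apply continuity_pt_g_aux. destruct qstar_spec. lra.
  - unfold lamhat in Hc. lra.
  - rewrite g_aux_qstar. lra.
  - exists q. destruct (Req_dec q qstar) as [->|h].
    + rewrite g_aux_qstar in Hq0. lra.
    + split; lra.
Qed.

Lemma q3_spec c : 0 < c -> qstar < q3 c < 1 /\ g_aux (q3 c) = c.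
Proof.
  intros Hc. apply (epsilon_spec (inhabits 0) (fun q => qstar < q < 1 /\ g_aux q = c)).
  destruct qstar_spec as [Hs Hs0].
  destruct (ellK_unbounded (PI + c + 1)) as [q1 [Hq1 [Hq1sq HK]]].
  assert (HP : ellP q1 <= - (c + 1))
    by (unfold ellP; pose proof (ellEc_le_PI2 q1 ltac:(nra)); lra).
  assert (Hlt : qstar < q1).
  { destruct (Rlt_or_le qstar q1) as [h|[h| ->]]; auto.
    - pose proof (ellP_pos_lt_qstar q1 ltac:(lra)). lra.
    - lra. }
  assert (Hg : c < g_aux q1).
  { unfold g_aux. fold (ellP q1).
    assert ((c + 1) ^ 2 <= ellP q1 ^ 2)
      by (replace (ellP q1 ^ 2) with ((- ellP q1) ^ 2) by ring; apply pow_incr; lra).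
    assert (8 * (c + 1) ^ 2 * (1 / 2) <= 8 * ellP q1 ^ 2 * (2 * q1 ^ 2 - 1))
      by (apply Rmult_le_compat; nra).
    nra. }
  destruct (IVT_interv (fun q => g_aux q - c) qstar q1) as [q [Hq Hq0]]; auto.
  - intros q Hq. apply continuity_pt_minus; [apply continuity_pt_g_aux; lra|].
    apply continuity_pt_const. intros ? ?; auto.
  - rewrite g_aux_qstar. lra.
  - lra.
  - exists q. destruct (Req_dec q qstar) as [->|h].
    + rewrite g_aux_qstar in Hq0. lra.
    + split; lra.
Qed.

(** * Comparison of the two energies *)

Definition reduced_energy (q : R) : R := ellP q * (ellP q + 2 * ellK q * (2 * q ^ 2 - 1)).
Definition g_root (q : R) : R := ellP q * sqrt (2 * q ^ 2 - 1).
Definition energy_gap (k q : R) : R := reduced_energy q - 2 * k * g_root q.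

Lemma g_root_sq q : 0 <= 2 * q ^ 2 - 1 -> 8 * g_root q ^ 2 = g_aux q.
Proof.
  intros Hw. unfold g_root, g_aux, ellP.
  rewrite Rpow_mult_distr, <- (Rsqr_pow2 (sqrt _)), Rsqr_sqrt by exact Hw. ring.
Qed.

Lemma g_aux_pos_weight q : 0 < g_aux q -> 0 < 2 * q ^ 2 - 1.
Proof.
  unfold g_aux. intros Hg. pose proof (pow2_ge_0 (2 * ellEc q - ellK q)).
  destruct (Rlt_or_le 0 (2 * q ^ 2 - 1)) as [h|h]; [exact h|nra].
Qed.

Lemma is_derive_energy_gap k q : 0 < q < 1 -> 1 / 2 < q ^ 2 ->
  is_derive (energy_gap k) q
    (2 * f_aux q / (q * (1 - q ^ 2)) * (ellK q - k / sqrt (2 * q ^ 2 - 1))).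
Proof.
  intros Hq Hq2. assert (Hw : 0 < 2 * q ^ 2 - 1) by lra.
  pose proof (sqrt_lt_R0 _ Hw). pose proof (sqrt_sqrt _ (Rlt_le _ _ Hw)) as HS.
  unfold energy_gap, reduced_energy, g_root, ellP.
  auto_derive; [repeat split; auto using ex_derive_ellK, ex_derive_ellEc; nra|].
  rewrite Derive_ellK, Derive_ellEc by exact Hq. unfold f_aux.
  replace (2 * (q * (q * 1)) + - 1) with (2 * q ^ 2 - 1) by ring.
  set (S := sqrt _) in *. field [HS]. repeat split; nra.
Qed.

Lemma ellK_mul_sqrt_lt q1 q2 : 1 / 2 < q1 ^ 2 -> 0 < q1 < q2 -> q2 < 1 ->
  ellK q1 * sqrt (2 * q1 ^ 2 - 1) < ellK q2 * sqrt (2 * q2 ^ 2 - 1).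
Proof.
  intros Hq1 Hq12 Hq2.
  pose proof (ellK_pos q1 ltac:(nra)). pose proof (ellK_le q1 q2 ltac:(lra) Hq2).
  assert (sqrt (2 * q1 ^ 2 - 1) < sqrt (2 * q2 ^ 2 - 1)) by (apply sqrt_lt_1_alt; nra).
  pose proof (sqrt_lt_R0 (2 * q1 ^ 2 - 1) ltac:(lra)). nra.
Qed.

Lemma energy_gap_factor_neg x : qhat < x < 1 -> 2 * f_aux x / (x * (1 - x ^ 2)) < 0.
Proof.
  intros Hx. destruct qhat_spec as [Hq _]. pose proof inv_sqrt2_pos.
  pose proof (f_aux_neg_gt_qhat x Hx).
  apply Rdiv_neg_pos; [lra|]. apply Rmult_lt_0_compat; nra.
Qed.

Section EnergyGap.

Let k := ellK qstar * sqrt (2 * qstar ^ 2 - 1).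

Lemma energy_gap_qstar : energy_gap k qstar = 0.
Proof.
  unfold energy_gap, reduced_energy, g_root. destruct qstar_spec as [_ ->]. ring.
Qed.

Lemma energy_gap_neg_below q : qhat <= q < qstar -> 1 / 2 < q ^ 2 -> energy_gap k q < 0.
Proof.
  intros Hq Hq2. destruct qstar_spec as [Hs _]. destruct qhat_spec as [Hqhat _].
  pose proof inv_sqrt2_pos. rewrite <- energy_gap_qstar.
  apply (lt_of_derive_pos (energy_gap k)
    (fun x => 2 * f_aux x / (x * (1 - x ^ 2)) * (ellK x - k / sqrt (2 * x ^ 2 - 1))));
    [lra| intros x Hx; apply is_derive_energy_gap; [lra|nra]|].
  intros x Hx. assert (Hx2 : 1 / 2 < x ^ 2) by nra.
  pose proof (sqrt_lt_R0 (2 * x ^ 2 - 1) ltac:(lra)).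
  pose proof (ellK_mul_sqrt_lt x qstar Hx2 ltac:(lra) ltac:(lra)).
  assert (ellK x - k / sqrt (2 * x ^ 2 - 1) < 0).
  { apply (Rmult_lt_reg_r (sqrt (2 * x ^ 2 - 1))); [lra|].
    unfold Rdiv. rewrite Rmult_minus_distr_r, Rmult_assoc, Rinv_l by lra. unfold k. lra. }
  pose proof (energy_gap_factor_neg x ltac:(lra)). nra.
Qed.

Lemma energy_gap_neg_above q : qstar < q < 1 -> energy_gap k q < 0.
Proof.
  intros Hq. destruct qstar_spec as [Hs _].
  pose proof inv_sqrt2_lt_qstar. pose proof inv_sqrt2_pos. pose proof inv_sqrt2_sq.
  pose proof qhat_lt_qstar.
  rewrite <- energy_gap_qstar.
  apply (lt_of_derive_neg (energy_gap k)
    (fun x => 2 * f_aux x / (x * (1 - x ^ 2)) * (ellK x - k / sqrt (2 * x ^ 2 - 1))));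
    [lra| intros x Hx; apply is_derive_energy_gap; [lra|nra]|].
  intros x Hx. assert (Hs2 : 1 / 2 < qstar ^ 2) by nra.
  pose proof (sqrt_lt_R0 (2 * x ^ 2 - 1) ltac:(nra)).
  pose proof (ellK_mul_sqrt_lt qstar x Hs2 ltac:(lra) ltac:(lra)).
  assert (0 < ellK x - k / sqrt (2 * x ^ 2 - 1)).
  { apply (Rmult_lt_reg_r (sqrt (2 * x ^ 2 - 1))); [lra|].
    unfold Rdiv. rewrite Rmult_minus_distr_r, Rmult_assoc, Rinv_l by lra. unfold k. lra. }
  pose proof (energy_gap_factor_neg x ltac:(lra)). nra.
Qed.

End EnergyGap.

Lemma reduced_energy_sum_neg c : 0 < c < lamhat ->
  reduced_energy (q2 c) + reduced_energy (q3 c) < 0.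
Proof.
  intros Hc.
  destruct (q2_spec c Hc) as [Ha Hga]. destruct (q3_spec c (proj1 Hc)) as [Hb Hgb].
  destruct qstar_spec as [Hs _]. destruct qhat_spec as [Hqhat _].
  pose proof inv_sqrt2_pos. pose proof inv_sqrt2_sq. pose proof inv_sqrt2_lt_qstar.
  pose proof (g_aux_pos_weight (q2 c) ltac:(lra)) as Hwa.
  pose proof (g_aux_pos_weight (q3 c) ltac:(lra)) as Hwb.
  pose proof (energy_gap_neg_below (q2 c) ltac:(lra) ltac:(lra)) as HA.
  pose proof (energy_gap_neg_above (q3 c) Hb) as HB.
  assert (Hroot : g_root (q2 c) = - g_root (q3 c)).
  { pose proof (g_root_sq (q2 c) ltac:(lra)). pose proof (g_root_sq (q3 c) ltac:(lra)).
    pose proof (ellP_pos_lt_qstar (q2 c) ltac:(lra)). pose proof (ellP_neg_gt_qstar (q3 c) Hb).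
    pose proof (sqrt_lt_R0 _ Hwa). pose proof (sqrt_lt_R0 _ Hwb).
    assert (0 < g_root (q2 c)) by (apply Rmult_lt_0_compat; lra).
    assert (g_root (q3 c) < 0) by (unfold g_root; nra).
    nra. }
  unfold energy_gap in HA, HB. rewrite Hroot in HA. lra.
Qed.

Lemma gamma_larc_elastica lam l :
  gamma_larc lam l = elastica 1 (alpha_larc lam l) (q2 (lam * l ^ 2)).
Proof.
  apply functional_extensionality. intros s. unfold gamma_larc, elastica. cbv zeta.
  f_equal. ring.
Qed.

Lemma gamma_loop_elastica lam l :
  gamma_loop lam l = elastica (- 1) (alpha_loop lam l) (q3 (lam * l ^ 2)).
Proof.
  apply functional_extensionality. intros s. unfold gamma_loop, elastica. cbv zeta.
  f_equal. ring.
Qed.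

Lemma energy_larc lam l : 0 < l -> 0 < lam * l ^ 2 < lamhat ->
  energy lam (gamma_larc lam l) 0 (end_larc lam l) = 8 * reduced_energy (q2 (lam * l ^ 2)) / l.
Proof.
  intros Hl Hc. destruct (q2_spec _ Hc) as [Hq Hg].
  destruct qstar_spec as [Hs _]. destruct qhat_spec as [Hqhat _]. pose proof inv_sqrt2_pos.
  pose proof (ellP_pos_lt_qstar (q2 (lam * l ^ 2)) ltac:(lra)) as HP.
  assert (Ha : 0 < alpha_larc lam l).
  { apply Rmult_lt_0_compat; [apply Rdiv_lt_0_compat|]; [lra|lra|exact HP]. }
  rewrite gamma_larc_elastica. unfold end_larc.
  rewrite energy_elastica; [|ring|lra|nra].
  unfold alpha_larc in *. set (q := q2 (lam * l ^ 2)) in *.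
  replace lam with (g_aux q / l ^ 2) by (rewrite Hg; field; lra).
  unfold g_aux, reduced_energy, ellP in *. field. split; lra.
Qed.

Lemma energy_loop lam l : 0 < l -> 0 < lam * l ^ 2 ->
  energy lam (gamma_loop lam l) 0 (end_loop lam l) = - 8 * reduced_energy (q3 (lam * l ^ 2)) / l.
Proof.
  intros Hl Hc. destruct (q3_spec _ Hc) as [Hq Hg].
  pose proof (ellP_neg_gt_qstar (q3 (lam * l ^ 2)) Hq) as HP.
  assert (Ha : 0 < alpha_loop lam l).
  { apply Rmult_lt_0_compat; [apply Rdiv_lt_0_compat|]; [lra|lra|unfold ellP in HP; lra]. }
  rewrite gamma_loop_elastica. unfold end_loop.
  rewrite energy_elastica; [|ring|lra|destruct qstar_spec; nra].
  unfold alpha_loop in *. set (q := q3 (lam * l ^ 2)) in *.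
  replace lam with (g_aux q / l ^ 2) by (rewrite Hg; field; lra).
  unfold g_aux, reduced_energy, ellP in *. field. split; lra.
Qed.

Theorem lemma4p6 (lam l : R) (Hlam : 0 < lam) (Hl : 0 < l)
  (Hsmall : lam * l ^ 2 < lamhat) :
  energy lam (gamma_larc lam l) 0 (end_larc lam l)
  < energy lam (gamma_loop lam l) 0 (end_loop lam l).
Proof.
  assert (Hc : 0 < lam * l ^ 2) by (apply Rmult_lt_0_compat; [|apply pow_lt]; assumption).
  rewrite energy_larc, energy_loop by (try split; assumption).
  pose proof (reduced_energy_sum_neg (lam * l ^ 2) (conj Hc Hsmall)).
  unfold Rdiv. apply Rmult_lt_compat_r; [apply Rinv_0_lt_compat, Hl|lra].
Qed.
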